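(* Let $q_\sigma$ be a noise distribution satisfying the Assumption below, let $p$ be a probability distribution on $\mathcal A$ with finite support, let $a'\in\mathcal A$ with $q_\sigma(a'\mid a)>0$ for all $a\in\mathrm{supp}(p)$ and $\sigma>0$, and let $S:\mathcal A\times\mathcal A\to\mathbb R$ be any function. Define $$p(a\mid a')=\frac{q_\sigma(a'\mid a)\,p(a)}{\sum_{b\in\mathrm{supp}(p)}q_\sigma(a'\mid b)\,p(b)}.$$ Then $$\lim_{\sigma\to0^+}\sum_{a\in\mathrm{supp}(p)}S(a,a')\,p(a\mid a')=\frac{\sum_{a\in C(a',p)}S(a,a')\,p(a)}{\sum_{a\in C(a',p)}p(a)}=\mathbb{E}_{a\sim p_C(\cdot\mid a')}\big[S(a,a')\big],$$ where $C(a',p)=\{a\in\mathrm{supp}(p):\ \|a'-a\|_2^2\le\|a'-y\|_2^2\ \text{for all } y\in\mathrm{supp}(p)\}$ and $p_C(a\mid a')=p(a)/\sum_{b\in C(a',p)}p(b)$ for $a\in C(a',p)$.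
   Context: Action space $\mathcal A\subseteq\mathbb R^n$. A noise distribution $q_\sigma(\cdot\mid a)$ is a probability density/mass function parameterized by $a\in\mathcal A$ and $\sigma>0$ whose support contains $\mathcal A$. Assumption: for all $a,a_1,a_2\in\mathcal A$: (1) if $\|a_1-a\|_2^2>\|a_2-a\|_2^2$ then $\lim_{\sigma\to0^+}q_\sigma(a\mid a_1)/q_\sigma(a\mid a_2)=0$; (2) if $\|a_1-a\|_2^2=\|a_2-a\|_2^2$ then $\lim_{\sigma\to0^+}q_\sigma(a\mid a_1)/q_\sigma(a\mid a_2)=1$. *)

From HB Require Import structures.
From mathcomp Require Import all_boot all_order all_algebra.
From mathcomp Require Import all_classical all_reals all_analysis.
Set Implicit Arguments. Unset Strict Implicit. Unset Printing Implicit Defensive.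
Import Order.TTheory GRing.Theory Num.Theory.
Import numFieldNormedType.Exports.
Local Open Scope ring_scope.
Local Open Scope classical_set_scope.

Definition sqdist (R : realType) (n : nat) (x y : 'rV[R]_n) : R :=
  \sum_(i < n) (x ord0 i - y ord0 i) ^+ 2.

(* A noise family q sigma x a = q_sigma(x | a): nonnegative, satisfying
   the Assumption (1) and (2) on the action space A. *)
Definition noise_assumption (R : realType) (n : nat) (A : set 'rV[R]_n)
  (q : R -> 'rV[R]_n -> 'rV[R]_n -> R) : Prop :=
  (forall s x a, 0 < s -> 0 <= q s x a) /\
  (forall a a1 a2, A a -> A a1 -> A a2 ->
     sqdist a1 a > sqdist a2 a ->
     (fun s => q s a a1 / q s a a2) @ 0^'+ --> (0:R)) /\
  (forall a a1 a2, A a -> A a1 -> A a2 ->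
     sqdist a1 a = sqdist a2 a ->
     (fun s => q s a a1 / q s a a2) @ 0^'+ --> (1:R)).

Definition finite_support_prob (R : realType) (n : nat) (A : set 'rV[R]_n)
  (p : 'rV[R]_n -> R) (supp : seq 'rV[R]_n) : Prop :=
  uniq supp /\ {subset supp <= A} /\
  (forall x, 0 <= p x) /\ (forall x, (0 < p x) <-> (x \in supp)) /\
  \sum_(x <- supp) p x = 1.

Definition closest (R : realType) (n : nat) (supp : seq 'rV[R]_n)
  (a' : 'rV[R]_n) : pred 'rV[R]_n :=
  [pred a | (a \in supp) && all (fun y => sqdist a' a <= sqdist a' y) supp].

Definition posterior (R : realType) (n : nat) (q : R -> 'rV[R]_n -> 'rV[R]_n -> R)
  (p : 'rV[R]_n -> R) (supp : seq 'rV[R]_n) (s : R) (a' a : 'rV[R]_n) : R :=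
  q s a' a * p a / \sum_(b <- supp) q s a' b * p b.

Definition pC (R : realType) (n : nat) (p : 'rV[R]_n -> R) (supp : seq 'rV[R]_n)
  (a' a : 'rV[R]_n) : R :=
  p a / \sum_(b <- supp | b \in closest supp a') p b.

From HB Require Import structures.
From mathcomp Require Import all_boot all_order all_algebra.
From mathcomp Require Import all_classical all_reals all_analysis.
Import Order.TTheory GRing.Theory Num.Theory.
Import numFieldNormedType.Exports.
Local Open Scope ring_scope.
Local Open Scope classical_set_scope.

(* Divide all posterior weights by the weight q_s(a'|c) of one closest point c.
   By the Assumption the rescaled weight of b tends to 1 if b is also closest
   and to 0 otherwise, so the posterior expectation, a ratio of finite sums
   invariant under this rescaling, tends to the p-weighted mean of S over the
   closest points C(a', p), whose total mass is positive since c lies in the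
   support. *)

Section WeightedMean.
Context {R : fieldType} {T : eqType}.

Lemma sum_mul_normalize (s : seq T) (P : pred T) (f w : T -> R) (W : R) :
  \sum_(b <- s | P b) f b * (w b / W) = (\sum_(b <- s | P b) f b * w b) / W.
Proof. by rewrite big_distrl; apply: eq_bigr => b _; rewrite mulrA. Qed.

Lemma weighted_mean_scale (s : seq T) (f w : T -> R) (k : R) : k != 0 ->
  (\sum_(b <- s) f b * w b) / \sum_(b <- s) w b =
  (\sum_(b <- s) f b * (w b / k)) / \sum_(b <- s) (w b / k).
Proof.
move=> k0; rewrite sum_mul_normalize -big_distrl /=.
by rewrite invf_div mulrA divfK.
Qed.

Lemma sum_natr_mul (s : seq T) (P : pred T) (F : T -> R) :
  \sum_(b <- s) (P b)%:R * F b = \sum_(b <- s | P b) F b.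
Proof.
by rewrite [RHS]big_mkcond; apply: eq_bigr => b _; case: (P b); rewrite ?mul1r ?mul0r.
Qed.

End WeightedMean.

Section WeightedMeanLimit.
Context {R : numFieldType} {T : eqType} {U : Type}.
Context {F : set_system U} {FF : Filter F}.

Lemma cvg_sum_seq (s : seq T) (f : T -> U -> R) (l : T -> R) :
  (forall b, b \in s -> f b @ F --> l b) ->
  \sum_(b <- s) f b x @[x --> F] --> \sum_(b <- s) l b.
Proof.
move=> fl; rewrite big_seq; under eq_cvg do rewrite big_seq.
by apply: cvg_big => //; exact: add_continuous.
Qed.

Lemma cvg_weighted_mean (s : seq T) (f : T -> R) (w : U -> T -> R) (l : T -> R) :
  (forall b, b \in s -> w ^~ b @ F --> l b) -> \sum_(b <- s) l b != 0 ->
  (\sum_(b <- s) f b * w x b) / \sum_(b <- s) w x b @[x --> F] -->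
  (\sum_(b <- s) f b * l b) / \sum_(b <- s) l b.
Proof.
move=> wl l0; apply: cvgM; last by apply: cvgV l0 _; exact: cvg_sum_seq.
by apply: cvg_sum_seq => b /wl; exact: cvgMl_tmp.
Qed.

End WeightedMeanLimit.

Lemma exists_argmin_seq {R : realDomainType} {T : eqType} (s : seq T) (f : T -> R) :
  s != [::] -> exists2 c, c \in s & forall y, y \in s -> f c <= f y.
Proof.
elim: s => [//|x s IH] _.
case: (eqVneq s [::]) => [->|/IH [c cs Hc]].
  by exists x; rewrite ?inE // => y; rewrite inE => /eqP ->.
case: (leP (f x) (f c)) => fxc.
  exists x; first by rewrite inE eqxx.
  by move=> y; rewrite inE => /orP [/eqP -> //|/Hc]; exact: le_trans.
exists c; first by rewrite inE cs orbT.
by move=> y; rewrite inE => /orP [/eqP -> |/Hc //]; exact: ltW.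
Qed.

Section Closest.
Context {R : realType} {n : nat} {supp : seq 'rV[R]_n} {a' : 'rV[R]_n}.

Lemma sqdistC (x y : 'rV[R]_n) : sqdist x y = sqdist y x.
Proof. by apply: eq_bigr => i _; rewrite -sqrrN opprB. Qed.

Lemma closest_exists : supp != [::] -> exists c, c \in closest supp a'.
Proof.
move=> /(exists_argmin_seq _ (sqdist a')) [c cs cmin].
by exists c; rewrite inE cs; apply/allP.
Qed.

Lemma closest_sqdist_eq {b c : 'rV[R]_n} :
  b \in closest supp a' -> c \in closest supp a' -> sqdist b a' = sqdist c a'.
Proof.
rewrite !inE => /andP[bs /allP bmin] /andP[cs /allP cmin].
by rewrite !(sqdistC _ a'); apply/eqP; rewrite eq_le bmin ?cmin.
Qed.

Lemma closest_sqdist_lt {b c : 'rV[R]_n} : b \in supp ->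
  b \notin closest supp a' -> c \in closest supp a' -> sqdist c a' < sqdist b a'.
Proof.
rewrite !inE => bs; rewrite bs /= => /allPn [y ys]; rewrite -ltNge => ylt.
move=> /andP[_ /allP cmin]; rewrite !(sqdistC _ a').
exact: le_lt_trans (cmin _ ys) ylt.
Qed.

Lemma noise_ratio_closest (A : set 'rV[R]_n) (q : R -> 'rV[R]_n -> 'rV[R]_n -> R)
    {b c : 'rV[R]_n} :
  noise_assumption A q -> {subset supp <= A} -> A a' ->
  b \in supp -> c \in closest supp a' ->
  q s a' b / q s a' c @[s --> 0^'+] --> ((b \in closest supp a')%:R : R).
Proof.
move=> [_ [farther equal]] suppA Aa' bs cC.
have Ac : A c by apply/set_mem/suppA; move: cC; rewrite inE => /andP[].
have Ab : A b by exact/set_mem/suppA.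
have [bC|bNC] := boolP (b \in closest supp a').
  by rewrite /= mulr1n; exact: equal Aa' Ab Ac (closest_sqdist_eq bC cC).
by rewrite /= mulr0n; exact: farther Aa' Ab Ac (closest_sqdist_lt bs bNC cC).
Qed.

End Closest.

Theorem mainTheorem3 (R : realType) (n : nat) (A : set 'rV[R]_n)
  (q : R -> 'rV[R]_n -> 'rV[R]_n -> R)
  (p : 'rV[R]_n -> R) (supp : seq 'rV[R]_n) (a' : 'rV[R]_n)
  (S : 'rV[R]_n -> 'rV[R]_n -> R) :
  noise_assumption A q ->
  finite_support_prob A p supp ->
  A a' ->
  (forall a s, a \in supp -> 0 < s -> 0 < q s a' a) ->
  ((fun s => \sum_(a <- supp) S a a' * posterior q p supp s a' a) @ 0^'+ -->
     (\sum_(a <- supp | a \in closest supp a') S a a' * p a) /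
     (\sum_(a <- supp | a \in closest supp a') p a)) /\
  (\sum_(a <- supp | a \in closest supp a') S a a' * p a) /
     (\sum_(a <- supp | a \in closest supp a') p a)
  = \sum_(a <- supp | a \in closest supp a') S a a' * pC p supp a' a.
Proof.
move=> qA [_ [suppA [p0 [pP p1]]]] Aa' qpos.
split; last by rewrite /pC sum_mul_normalize.
have supp0 : supp != [::].
  by apply: contra_eqN p1 => /eqP ->; rewrite big_nil eq_sym oner_eq0.
have [c cC] := closest_exists (a' := a') supp0.
have cs : c \in supp by move: cC; rewrite inE => /andP[].
pose C b := b \in closest supp a'.
have massC : \sum_(b <- supp) (C b)%:R * p b != 0.
  rewrite psumr_neq0 => [|b _]; last by rewrite mulr_ge0.
  by apply/hasP; exists c => //; rewrite /C cC /= mulr1n mul1r; apply/pP.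
have -> : (\sum_(b <- supp | C b) S b a' * p b) / \sum_(b <- supp | C b) p b =
    (\sum_(b <- supp) S b a' * ((C b)%:R * p b)) / \sum_(b <- supp) (C b)%:R * p b.
  rewrite -!(sum_natr_mul _ C); congr (_ / _).
  by apply: eq_bigr => b _; rewrite mulrCA.
pose w s b := q s a' b * p b / q s a' c.
have wC b : b \in supp -> w ^~ b @ 0^'+ --> (C b)%:R * p b.
  move=> bs; under eq_cvg do rewrite /w mulrAC.
  by apply: cvgMr_tmp; exact: noise_ratio_closest qA suppA Aa' bs cC.
apply: cvg_trans _ (cvg_weighted_mean supp (S ^~ a') w _ wC massC).
apply: near_eq_cvg; near=> s.
have qc0 : q s a' c != 0.
  by apply: lt0r_neq0; apply: qpos cs _; near: s; exact: nbhs_right_gt.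
by rewrite /= /posterior [RHS]sum_mul_normalize [RHS](weighted_mean_scale _ _ _ _ qc0).
Unshelve. all: by end_near.
Qed.
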